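(* Let $\mathcal{C}\subseteq\{0,1\}^*$ be a full prefix-free codebook, i.e., $\mathcal{C}$ is prefix-free and $\sum_{k\in\mathcal{C}}2^{-|k|}=1$. Let $K$ be a random variable with probability mass function $p_K(k)=2^{-|k|}$ for $k\in\mathcal{C}$. Then $K$ is a randomly-stopped bit sequence.
   Context: $\{0,1\}^*:=\bigcup_{n\ge0}\{0,1\}^n$; for $K\in\{0,1\}^*$, $|K|$ is its length, $K_i$ its $i$-th entry, and $K^{j}=(K_1,\dots,K_j)$. A random $K\in\{0,1\}^*$ is a randomly-stopped bit sequence if $\mathbb{P}(K_n=k_n\mid |K|\ge n,\,K^{n-1}=k^{n-1})=1/2$ for all $n\ge1$ and all $k^n\in\{0,1\}^n$ with $\mathbb{P}(|K|\ge n,\,K^{n-1}=k^{n-1})>0$. *)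

From HB Require Import structures.
From mathcomp Require Import all_boot all_order all_algebra.
From mathcomp Require Import all_classical all_reals all_analysis.
Set Implicit Arguments. Unset Strict Implicit. Unset Printing Implicit Defensive.
Import Order.TTheory GRing.Theory Num.Theory.
Local Open Scope classical_set_scope.
Local Open Scope ring_scope.

(* Bit strings {0,1}^* are represented by [seq bool]; |k| = size k,
   K_i (1-indexed) = nth false K (i-1), K^j = take j K. *)

Definition prefix_free (C : set (seq bool)) : Prop :=
  forall k k', C k -> C k' -> prefix k k' -> k = k'.

Definition kraft_full (R : realType) (C : set (seq bool)) : Prop :=
  (\esum_(k in C) ((2%:R : R) ^- size k)%:E = 1)%E.

Definition full_prefix_free (R : realType) (C : set (seq bool)) : Prop :=
  prefix_free C /\ kraft_full R C.

(* Events used in the definition (n is 1-indexed as in the paper, n >= 1):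
   {|K| >= n, K^{n-1} = k^{n-1}}  and  {K_n = k_n}. *)
Definition ev_prefix {T : Type} (K : T -> seq bool) (n : nat) (kn : seq bool)
  : set T :=
  [set w | (n <= size (K w))%N /\ take n.-1 (K w) = take n.-1 kn].

Definition ev_bit {T : Type} (K : T -> seq bool) (n : nat) (kn : seq bool)
  : set T :=
  [set w | nth false (K w) n.-1 = nth false kn n.-1].

Definition randomly_stopped (d : measure_display) (T : measurableType d)
  (R : realType) (P : probability T R) (K : T -> seq bool) : Prop :=
  forall (n : nat) (kn : seq bool), (1 <= n)%N -> size kn = n ->
    (0 < P (ev_prefix K n kn))%E ->
    fine (P (ev_prefix K n kn `&` ev_bit K n kn)) / fine (P (ev_prefix K n kn))
      = 2^-1.

From HB Require Import structures.
From mathcomp Require Import all_boot all_order all_algebra.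
From mathcomp Require Import all_classical all_reals all_analysis.
From mathcomp Require Import ring lra.
Set Implicit Arguments. Unset Strict Implicit. Unset Printing Implicit Defensive.
Import Order.TTheory GRing.Theory Num.Theory.
Local Open Scope classical_set_scope.
Local Open Scope ring_scope.

(* Write p(v) for the probability that K extends the string v. The codewords
   carry total mass 1, so K is almost surely a codeword, and prefix-freeness
   gives p(v) = [v \in C] 2^-|v| + p(v0) + p(v1). Unfolding this identity to a
   bounded depth and passing to the limit yields Kraft's inequality
   p(v) <= 2^-|v|. If no prefix of u is a codeword, the identity read from the
   root down then forces p(u0) = p(u1) = 2^-(|u|+1), which is the claim;
   otherwise the conditioning event {K extends u0 or u1} is null. *)

Lemma exp2VS_add (F : numFieldType) m :
  (2%:R : F) ^- m.+1 + 2%:R ^- m.+1 = 2%:R ^- m.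
Proof.
have two_m_neq0 : (2%:R : F) ^+ m != 0 by rewrite expf_neq0 // pnatr_eq0.
by rewrite exprS; field.
Qed.

Lemma take_size_rcons (A : Type) (u : seq A) x : take (size u) (rcons u x) = u.
Proof. by rewrite -cats1 take_size_cat. Qed.

Lemma prefix_rconsE (v k : seq bool) b :
  prefix (rcons v b) k = [&& prefix v k, size v < size k & nth false k (size v) == b]%N.
Proof.
rewrite !prefixE size_rcons; have [lt_vk|] := ltnP (size v) (size k).
  by rewrite (take_nth false lt_vk) eqseq_rcons.
move=> le_kv; rewrite andbF take_oversize ?(leq_trans le_kv) //.
by apply/negbTE; apply: contraTN le_kv => /eqP ->; rewrite size_rcons -ltnNge.
Qed.

Lemma prefix_rcons_leq (A : eqType) (w v : seq A) x :
  prefix w (rcons v x) -> (size w <= size v)%N -> prefix w v.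
Proof. by rewrite !prefixE -cats1 => /[swap] /takel_cat ->. Qed.

Definition ext (v : seq bool) : set (seq bool) := [set k | prefix v k].

Lemma ext_split v : ext v = [set v] `|` ext (rcons v false) `|` ext (rcons v true).
Proof.
apply/seteqP; split => k /=; rewrite /ext /= !prefix_rconsE; last first.
  by case=> [[->|/and3P[]]|/and3P[]] //; rewrite prefix_refl.
move=> vk; have [->|neq_kv] := eqVneq k v; [by left; left|].
have lt_vk : (size v < size k)%N.
  rewrite ltn_neqAle size_prefix // andbT; apply: contra neq_kv => /eqP eq_vk.
  by move: vk; rewrite prefixE eq_vk take_size eq_sym.
by case: (nth false k (size v)) => /=; [right|left; right]; rewrite vk lt_vk.
Qed.

Lemma ext_rcons_disj v : ext (rcons v false) `&` ext (rcons v true) = set0.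
Proof.
apply/seteqP; split => // k [] /=; rewrite /ext /= !prefix_rconsE.
by move=> /and3P[_ _ /eqP ->] /and3P[].
Qed.

Lemma ext_rcons_nonself v b : [set v] `&` ext (rcons v b) = set0.
Proof.
by apply/seteqP; split => // k [/= ->]; rewrite /ext /= prefix_rconsE ltnn andbF.
Qed.

Lemma ev_prefix_rcons (T : Type) (K : T -> seq bool) u b :
  ev_prefix K (size u).+1 (rcons u b) =
  K @^-1` (ext (rcons u false) `|` ext (rcons u true)).
Proof.
rewrite /ev_prefix /= take_size_rcons.
apply/seteqP; split => w; rewrite /ext /= !prefix_rconsE prefixE.
  by case=> -> /eqP ->; case: (nth false (K w) (size u)); [right|left].
by case=> /and3P[/eqP -> ->].
Qed.

Lemma ev_prefix_bit_rcons (T : Type) (K : T -> seq bool) u b :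
  ev_prefix K (size u).+1 (rcons u b) `&` ev_bit K (size u).+1 (rcons u b) =
  K @^-1` ext (rcons u b).
Proof.
rewrite /ev_prefix /ev_bit /= take_size_rcons nth_rcons ltnn eqxx.
apply/seteqP; split => w; rewrite /ext /= prefix_rconsE prefixE.
  by case=> -[-> /eqP ->] ->; rewrite !eqxx.
by case/and3P => /eqP -> -> /eqP.
Qed.

Section DiscreteLaw.
Context {d : measure_display} {T : measurableType d} {R : realType}
  (P : probability T R) (K : T -> seq bool).
Hypothesis measurable_fiber : forall k, measurable (K @^-1` [set k]).

Lemma measurable_preimage (S : set (seq bool)) : measurable (K @^-1` S).
Proof.
have -> : K @^-1` S = \bigcup_(k in S) K @^-1` [set k].
  by apply/seteqP; split => [w Sw|w [k Sk /= ->]] //; exists (K w).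
rewrite bigcup_mkcond; apply: countable_bigcupT_measurable => [|k];
  [exact: countableP|by case: ifP].
Qed.

Definition pK (S : set (seq bool)) : R := fine (P (K @^-1` S)).

Lemma pKE S : P (K @^-1` S) = (pK S)%:E.
Proof.
rewrite fineK // ge0_fin_numE ?measure_ge0 //.
by rewrite (le_lt_trans (probability_le1 P (measurable_preimage S))) ?ltry.
Qed.

Lemma pK_ge0 S : 0 <= pK S.
Proof. by rewrite -lee_fin -pKE measure_ge0. Qed.

Lemma pK_set0 : pK set0 = 0.
Proof. by rewrite /pK preimage_set0 measure0. Qed.

Lemma pK_setT : pK setT = 1.
Proof. by rewrite /pK preimage_setT probability_setT. Qed.

Lemma le_pK S S' : S `<=` S' -> pK S <= pK S'.
Proof.
move=> SS'; rewrite -lee_fin -!pKE; apply: le_measure; rewrite ?inE;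
  [exact: measurable_preimage..|exact: preimage_subset].
Qed.

Lemma pK_setU S S' : S `&` S' = set0 -> pK (S `|` S') = pK S + pK S'.
Proof.
move=> SS'0; apply: EFin_inj; rewrite EFinD -!pKE preimage_setU measureU //;
  [exact: measurable_preimage..|].
by rewrite -preimage_setI SS'0 preimage_set0.
Qed.

Lemma pK_bigcup_le (S : (set (seq bool))^nat) c :
  nondecreasing_seq S -> (forall n, pK (S n) <= c) -> pK (\bigcup_n S n) <= c.
Proof.
move=> ndS leSc; rewrite -lee_fin -pKE preimage_bigcup.
have ndKS : nondecreasing_seq (fun n => K @^-1` S n).
  by move=> m n mn; apply/subsetPset; apply: preimage_subset; apply/subsetPset/ndS.
have cvgKS := @nondecreasing_cvg_mu _ _ _ P _ (fun n => measurable_preimage (S n))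
  (bigcupT_measurable _ (fun n => measurable_preimage (S n))) ndKS.
rewrite -(cvg_lim _ cvgKS) //; apply: lime_le; first exact: cvgP cvgKS.
by apply: nearW => n /=; rewrite pKE lee_fin.
Qed.

Section FullPrefixFreeCode.
Context {C : set (seq bool)}.
Hypothesis C_full : full_prefix_free R C.
Hypothesis pmf_code : forall k, C k -> P (K @^-1` [set k]) = ((2%:R : R) ^- size k)%:E.

Lemma pK_code : pK C = 1.
Proof.
apply/le_anti/andP; split; first by rewrite -pK_setT le_pK.
rewrite -lee_fin -pKE; case: C_full => _ <-.
apply: ge_ereal_sup => _ [X [finX XC] <-].
rewrite (@eq_fsbigr _ _ _ _ _ (fun k => P (K @^-1` [set k]))); last first.
  by move=> k; rewrite inE => Xk; rewrite pmf_code //; apply: XC.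
rewrite -measure_fin_bigcup //; last exact: trivIset_preimage1.
rewrite -preimage_bigcup; apply: le_measure; rewrite ?inE;
  [exact: measurable_preimage..|].
by apply: preimage_subset => _ [k Xk ->]; apply: XC.
Qed.

Lemma pK_setIC S : pK S = pK (S `&` C).
Proof.
have pK_noncode : pK (S `\` C) = 0.
  apply/le_anti; rewrite pK_ge0 andbT.
  have : pK C + pK (~` C) = 1 by rewrite -pK_setU ?setUv ?pK_setT ?setICr.
  have /le_pK : S `\` C `<=` ~` C by move=> k [].
  by rewrite pK_code; lra.
by rewrite -[in LHS](setUIDK S C) pK_setU ?pK_noncode ?addr0 // setDE setIACA setICr setI0.
Qed.

Lemma pK_eq0 S : S `&` C = set0 -> pK S = 0.
Proof. by move=> SC0; rewrite pK_setIC SC0 pK_set0. Qed.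

Lemma pK1_le v : pK [set v] <= (2%:R : R) ^- size v.
Proof.
have [Cv|nCv] := pselect (C v); first by rewrite -lee_fin -pKE pmf_code.
rewrite pK_eq0 ?invr_ge0 ?exprn_ge0 ?ler0n //.
by apply/seteqP; split => // _ [/= ->].
Qed.

Lemma pK_ext_splitI S v : pK (S `&` ext v) =
  pK (S `&` [set v]) + pK (S `&` ext (rcons v false)) + pK (S `&` ext (rcons v true)).
Proof.
have disjI X Y : X `&` Y = set0 -> (S `&` X) `&` (S `&` Y) = set0.
  by move=> XY0; rewrite setIACA setIid XY0 setI0.
rewrite {1}ext_split !setIUr !pK_setU ?disjI ?ext_rcons_nonself //.
by rewrite -setIUr disjI // setIUl ext_rcons_nonself ext_rcons_disj setU0.
Qed.

Lemma pK_ext_trunc_le n v :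
  pK (ext v `&` [set k | (size k <= size v + n)%N]) <= (2%:R : R) ^- size v.
Proof.
elim: n v => [|n IHn] v.
  apply: le_trans (pK1_le v); apply: le_pK => k [/= vk]; rewrite addn0 => le_kv.
  by move: vk; rewrite /ext /= prefixE take_oversize // => /eqP.
have [Cv|nCv] := pselect (C v).
  apply: le_trans (pK1_le v); rewrite pK_setIC [leRHS]pK_setIC.
  by apply: le_pK => k [[vk _] Ck]; split => //=; apply/esym/C_full.1.
rewrite setIC pK_ext_splitI (@pK_eq0 (_ `&` [set v])) ?add0r; last first.
  by apply/seteqP; split => // _ [[_ /= ->]].
have le_child b : pK ([set k | (size k <= size v + n.+1)%N] `&` ext (rcons v b))
    <= (2%:R : R) ^- (size v).+1.
  by rewrite setIC -addSnnS -(size_rcons v b) IHn.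
by rewrite -exp2VS_add lerD ?le_child.
Qed.

Lemma pK_ext_le v : pK (ext v) <= (2%:R : R) ^- size v.
Proof.
have -> : ext v = \bigcup_n (ext v `&` [set k | (size k <= size v + n)%N]).
  apply/seteqP; split => [k vk|k [n _ []] //].
  by exists (size k) => //; split => //=; apply: leq_addl.
apply: pK_bigcup_le => [m n le_mn|n]; last exact: pK_ext_trunc_le.
apply/subsetPset => k [vk le_k]; split => //=.
by rewrite (leq_trans le_k) // leq_add2l.
Qed.

Lemma pK_ext_free v : (forall w, prefix w v -> (size w < size v)%N -> ~ C w) ->
  pK (ext v) = (2%:R : R) ^- size v.
Proof.
elim/last_ind: v => [_|u b IHu free_ub].
  have -> : ext [::] = setT by apply/seteqP; split => // k _; apply: prefix0s.
  by rewrite pK_setT expr0 invr1.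
have pK_u : pK (ext u) = (2%:R : R) ^- size u.
  apply: IHu => w wu lt_wu; apply: free_ub; last by rewrite size_rcons ltnW.
  exact: prefix_trans wu (prefix_rcons u b).
have nCu : ~ C u by apply: free_ub; rewrite ?prefix_rcons ?size_rcons.
have := pK_ext_splitI setT u; rewrite !setTI pK_u pK_eq0 ?add0r; last first.
  by apply/seteqP; split => // _ [/= ->].
have := pK_ext_le (rcons u false); have := pK_ext_le (rcons u true).
rewrite !size_rcons; have := exp2VS_add R (size u).
by case: b {free_ub}; lra.
Qed.

Lemma pK_ext_rcons_blocked w u b : prefix w u -> C w -> pK (ext (rcons u b)) = 0.
Proof.
move=> wu Cw; apply: pK_eq0; apply/seteqP; split => // k [/= ubk Ck].
have wk : prefix w k by apply: prefix_trans ubk; apply: prefix_trans (prefix_rcons u b).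
move: ubk; rewrite -(C_full.1 w k Cw Ck wk) => /size_prefix.
by rewrite size_rcons ltnNge size_prefix.
Qed.

Lemma pK_ext_rcons_half u b :
  0 < pK (ext (rcons u false) `|` ext (rcons u true)) ->
  pK (ext (rcons u b)) / pK (ext (rcons u false) `|` ext (rcons u true)) = 2^-1.
Proof.
rewrite pK_setU ?ext_rcons_disj //.
have [[w [wu Cw]] | free_u] := pselect (exists w, prefix w u /\ C w).
  by rewrite !(pK_ext_rcons_blocked _ wu Cw) addr0 ltxx.
have pK_child c : pK (ext (rcons u c)) = (2%:R : R) ^- (size u).+1.
  rewrite pK_ext_free ?size_rcons // => w wuc lt_wu Cw; apply: free_u; exists w.
  by rewrite (prefix_rcons_leq wuc).
rewrite !pK_child => y_gt0; have y_neq0 : (2%:R : R) ^- (size u).+1 != 0 by lra.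
by field.
Qed.

End FullPrefixFreeCode.
End DiscreteLaw.

Theorem proposition1 (d : measure_display) (T : measurableType d)
  (R : realType) (P : probability T R) (K : T -> seq bool)
  (C : set (seq bool)) :
  full_prefix_free R C ->
  (* K is a random variable (discrete: each {K = k} is an event) *)
  (forall k : seq bool, measurable (K @^-1` [set k])) ->
  (* probability mass function p_K(k) = 2^{-|k|} for k in C *)
  (forall k : seq bool, C k -> P (K @^-1` [set k]) = ((2%:R : R) ^- size k)%:E) ->
  randomly_stopped P K.
Proof.
move=> C_full measK pmf n kn n_gt0 size_kn.
case/lastP: kn size_kn n_gt0 => [<- //|u b <- _]; rewrite size_rcons.
rewrite ev_prefix_bit_rcons ev_prefix_rcons !(pKE P measK) lte_fin /=.
exact: (pK_ext_rcons_half measK C_full pmf b).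
Qed.
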